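(* Let $n\ge 2$ and assume a weighing matrix of order $n$ and weight $n-1$ exists. Let $q$ be a prime power with $q\ge n$. Then there exists a set of $q-1$ mutually unbiased weighing matrices of order $nq$ and weight $(n-1)^2$.
   Context: A weighing matrix of order $n$ and weight $k$ is an $n\times n$ matrix $W$ with entries in $\{1,-1,0\}$ such that $WW^T=kI_n$. Two weighing matrices $W_1,W_2$ of order $N$ and weight $K$ are unbiased if $\frac{1}{\sqrt{K}}W_1W_2^T$ is a weighing matrix of order $N$ and weight $K$; a set is mutually unbiased if any two distinct members are unbiased. *)

From mathcomp Require Import all_boot all_order all_algebra all_field.
Set Implicit Arguments. Unset Strict Implicit. Unset Printing Implicit Defensive.
Import Order.TTheory GRing.Theory Num.Theory.
Local Open Scope ring_scope.

Definition is_weighing (R : pzRingType) (n k : nat) (W : 'M[R]_n) : Prop :=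
  (forall i j, W i j \in [:: 0; 1; -1]) /\ W *m W^T = (k%:R)%:M.

Definition toC (N : nat) (W : 'M[int]_N) : 'M[algC]_N := map_mx intr W.

Definition unbiased (N K : nat) (W1 W2 : 'M[int]_N) : Prop :=
  is_weighing K ((sqrtC (K%:R))^-1 *: (toC W1 *m (toC W2)^T)).

Definition prime_power (q : nat) : Prop :=
  exists p k : nat, prime p /\ (0 < k)%N /\ q = (p ^ k)%N.

From mathcomp Require Import all_boot all_order all_algebra all_field ring.
Set Implicit Arguments. Unset Strict Implicit. Unset Printing Implicit Defensive.
Import Order.TTheory GRing.Theory Num.Theory.
Local Open Scope ring_scope.

(* Let W be a weighing matrix of order n and weight k = n-1, let F be a field
   with q >= n elements and alpha : {0..n-1} -> F injective.  Index rows and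
   columns by F x {0..n-1} and, for beta in F, put
     M_beta((x,a),(y,b)) = sum_c [y = x + beta alpha_c] W_ac W_cb.
   Since W W^T = k I, the product M_beta M_gamma^T has entry
     k * sum_c [x + beta alpha_c = y + gamma alpha_c] W_ac W_bc.
   For beta = gamma this is k^2 [(x,a) = (y,b)]; for beta <> gamma at most one
   c satisfies the bracket, so the entry is k times a sign.  Hence the q-1
   matrices M_beta, beta <> 0, are weighing matrices of weight k^2 that are
   pairwise unbiased. *)

Definition signs : seq int := [:: 0; 1; -1].

Lemma signsM (x y : int) : x \in signs -> y \in signs -> x * y \in signs.
Proof. by rewrite !inE => /or3P[]/eqP-> /or3P[]/eqP->. Qed.

Lemma signs_sqr (x : int) : x \in signs -> x != 0 -> x * x = 1.
Proof. by rewrite !inE => /or3P[]/eqP->. Qed.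

Lemma sum_indicator_unique (R : pzSemiRingType) (I : finType) (P : pred I)
    (g : I -> R) c :
  P c -> (forall d, P d -> d = c) -> \sum_d (P d)%:R * g d = g c.
Proof.
move=> Pc Puniq; rewrite (bigD1 c) //= Pc mul1r big1 ?addr0 // => d dc.
by case Pd: (P d); [rewrite (Puniq d Pd) eqxx in dc | rewrite mul0r].
Qed.

Lemma sum_indicator_signs (I : finType) (P : pred I) (g : I -> int) :
  (forall c d, P c -> P d -> c = d) -> (forall c, g c \in signs) ->
  \sum_c (P c)%:R * g c \in signs.
Proof.
move=> Puniq gsign; case: (pickP P) => [c Pc|P0].
  by rewrite (@sum_indicator_unique _ _ _ _ c) // => d Pd; apply: Puniq.
by rewrite big1 // => c _; rewrite P0 mul0r.
Qed.

Lemma card_ord_bij (T : finType) N : #|T| = N -> {e : 'I_N -> T | bijective e}.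
Proof.
move=> cardT; exists (fun i => enum_val (cast_ord (esym cardT) i)).
exists (fun x => cast_ord cardT (enum_rank x)) => x.
  by rewrite enum_valK cast_ordKV.
by rewrite cast_ordK enum_rankK.
Qed.

Lemma injection_nonzero_at (F : finFieldType) n (c0 : 'I_n) :
  (n <= #|F|)%N -> {alpha : 'I_n -> F | injective alpha & alpha c0 != 0}.
Proof.
move=> nF; have [h hbij] := card_ord_bij (erefl #|F|).
pose f c := h (widen_ord nF c).
exists (fun c => f c - f c0 + 1); last by rewrite subrr add0r oner_neq0.
move=> c d /addIr /addIr /(bij_inj hbij) /(congr1 val) cd.
exact: val_inj.
Qed.

Lemma injection_nonzero (F : finFieldType) q :
  #|F| = q -> {beta : 'I_q.-1 -> F | injective beta & forall i, beta i != 0}.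
Proof.
move=> <-.
exists (fun i => enum_val (A := predC1 0) (cast_ord (esym (cardC1 0)) i)).
  by move=> i j /enum_val_inj /cast_ord_inj.
by move=> i; have := enum_valP (cast_ord (esym (cardC1 (0 : F))) i).
Qed.

Lemma weighing_row_nonzero n k (W : 'M[int]_n) (a : 'I_n) :
  (0 < k)%N -> is_weighing k W -> exists c, W a c != 0.
Proof.
move=> k0 [_ WWt]; apply/existsP; apply: contraT.
rewrite negb_exists => /forallP W0.
have : (W *m W^T) a a = k%:R by rewrite WWt mxE eqxx.
rewrite mxE big1 => [/eqP|c _]; first by rewrite eq_sym pnatr_eq0 eqn0Ngt k0.
by move/negbNE/eqP: (W0 c) => ->; rewrite mul0r.
Qed.

Lemma scalar_gram_trC (R : fieldType) m (B : 'M[R]_m) c :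
  c != 0 -> B *m B^T = c%:M -> B^T *m B = c%:M.
Proof.
move=> c0 BBt; have : (c^-1 *: B) *m B^T = 1%:M.
  by rewrite -scalemxAl BBt scale_scalar_mx mulVf.
move/mulmx1C; rewrite -scalemxAr => /(congr1 ( *:%R c)).
by rewrite scalerA divff // scale1r scale_scalar_mx mulr1.
Qed.

Lemma gram_mul_trmx (R : fieldType) m (A B : 'M[R]_m) c :
  c != 0 -> A *m A^T = c%:M -> B *m B^T = c%:M ->
  (A *m B^T) *m (A *m B^T)^T = (c ^+ 2)%:M.
Proof.
move=> c0 AAt BBt.
rewrite trmx_mul trmxK mulmxA -(mulmxA A) (scalar_gram_trC c0 BBt).
by rewrite mul_mx_scalar -scalemxAl AAt scale_scalar_mx expr2.
Qed.

Lemma unbiased_of_gram N k (A B E : 'M[int]_N) : (0 < k)%N ->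
  A *m A^T = (k ^ 2)%:R%:M -> B *m B^T = (k ^ 2)%:R%:M ->
  A *m B^T = k%:R *: E -> (forall r s, E r s \in signs) ->
  unbiased (k ^ 2) A B.
Proof.
move=> k0 AAt BBt ABt Esign.
have kC : (k%:R : algC) != 0 by rewrite pnatr_eq0 -lt0n.
have toC_gram (X Y : 'M[int]_N) : toC X *m (toC Y)^T = toC (X *m Y^T).
  by rewrite /toC map_trmx map_mxM.
have toC_gram_k2 (X : 'M[int]_N) :
    X *m X^T = (k ^ 2)%:R%:M -> toC X *m (toC X)^T = (k%:R ^+ 2)%:M.
  by rewrite toC_gram => ->; rewrite /toC map_scalar_mx rmorph_nat natrX.
have toC_ABt : toC A *m (toC B)^T = k%:R *: toC E.
  by rewrite toC_gram ABt; apply/matrixP => i j; rewrite !mxE rmorphM rmorph_nat.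
rewrite /unbiased natrX sqrCK ?ler0n // toC_ABt scalerK //; split.
  move=> i j; rewrite mxE; move: (Esign i j); rewrite !inE => /or3P[]/eqP->.
  - by rewrite rmorph0 eqxx.
  - by rewrite rmorph1 eqxx orbT.
  - by rewrite rmorphN rmorph1 eqxx !orbT.
have k2C : (k%:R ^+ 2 : algC) != 0 by rewrite expf_neq0.
have := gram_mul_trmx k2C (toC_gram_k2 A AAt) (toC_gram_k2 B BBt).
rewrite toC_ABt linearZ -scalemxAl -scalemxAr scalerA -expr2.
move/(congr1 ( *:%R (k%:R ^+ 2)^-1)); rewrite scalerK // => ->.
by rewrite scale_scalar_mx natrX (expr2 (k%:R ^+ 2)) mulKf.
Qed.

Section MubConstruction.

Variables (F : finFieldType) (n k : nat) (W : 'M[int]_n).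
Hypothesis W_weighing : is_weighing k W.
Variable alpha : 'I_n -> F.
Hypothesis alpha_inj : injective alpha.
Variables (N : nat) (e : 'I_N -> F * 'I_n).
Hypothesis e_bij : bijective e.

Definition mub_entry (beta : F) (u v : F * 'I_n) : int :=
  \sum_(c < n) ((v.1 == u.1 + beta * alpha c)%:R * W u.2 c) * W c v.2.

Definition mub_mx beta : 'M[int]_N := \matrix_(r, s) mub_entry beta (e r) (e s).

Definition coincidence (beta gamma : F) (u v : F * 'I_n) : int :=
  \sum_(c < n) (u.1 + beta * alpha c == v.1 + gamma * alpha c)%:R
                 * (W u.2 c * W v.2 c).

Lemma dot_mulW (g h : 'I_n -> int) :
  \sum_b ((\sum_c g c * W c b) * (\sum_d h d * W d b)) = k%:R * \sum_c g c * h c.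
Proof.
case: W_weighing => _ WWt.
transitivity (\sum_c \sum_d g c * h d * (W *m W^T) c d).
  under eq_bigr do rewrite mulr_suml.
  rewrite exchange_big /=; apply: eq_bigr => c _.
  under eq_bigr do rewrite mulr_sumr.
  rewrite exchange_big /=; apply: eq_bigr => d _.
  by rewrite mxE mulr_sumr; apply: eq_bigr => b _; rewrite mxE mulrACA.
rewrite mulr_sumr; apply: eq_bigr => c _; rewrite WWt.
rewrite (bigD1 c) //= big1 ?addr0 => [|d dc]; last first.
  by rewrite mxE eq_sym (negbTE dc) mulr0n mulr0.
by rewrite mxE eqxx mulr1n mulrC.
Qed.

Lemma mub_gram beta gamma :
  mub_mx beta *m (mub_mx gamma)^T =
  k%:R *: \matrix_(r, s) coincidence beta gamma (e r) (e s).
Proof.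
apply/matrixP => r s; rewrite !mxE.
under eq_bigr do rewrite !mxE.
rewrite -(reindex e (onW_bij _ e_bij) (P := xpredT)
   (F := fun t => mub_entry beta (e r) t * mub_entry gamma (e s) t)) /=.
rewrite -(pair_big xpredT xpredT
   (fun y b => mub_entry beta (e r) (y, b) * mub_entry gamma (e s) (y, b))) /=.
under eq_bigr do rewrite /mub_entry /= dot_mulW.
rewrite -mulr_sumr exchange_big /=; congr (_ * _); apply: eq_bigr => c _.
rewrite (bigD1 ((e r).1 + beta * alpha c)) //= eqxx mul1r big1 ?addr0.
  by rewrite mulrCA.
by move=> y /negbTE ->; rewrite mul0r mul0r.
Qed.

Lemma coincidence_diag beta u v : coincidence beta beta u v = (u == v)%:R * k%:R.
Proof.
case: W_weighing => _ WWt; case: u v => [x a] [y b]; rewrite /coincidence /=.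
under eq_bigr do rewrite (inj_eq (addIr _)).
rewrite -mulr_sumr xpair_eqE.
have -> : \sum_c W a c * W b c = (W *m W^T) a b.
  by rewrite mxE; apply: eq_bigr => c _; rewrite mxE.
by rewrite WWt mxE; case: (x == y); case: (a == b); rewrite ?mul0r ?mul1r.
Qed.

Lemma mub_self_gram beta : mub_mx beta *m (mub_mx beta)^T = (k ^ 2)%:R%:M.
Proof.
apply/matrixP => r s; rewrite mub_gram !mxE coincidence_diag.
rewrite (inj_eq (bij_inj e_bij)) natrX.
by case: (r == s); rewrite ?mul0r ?mulr0 ?mul1r.
Qed.

Lemma mub_weighing beta : beta != 0 -> is_weighing (k ^ 2) (mub_mx beta).
Proof.
move=> beta0; split; last exact: mub_self_gram.
move=> r s; rewrite mxE /mub_entry; case: W_weighing => Wsign _.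
under eq_bigr do rewrite -mulrA.
apply: sum_indicator_signs => [c d /eqP-> /eqP cd|c]; last exact: signsM.
by apply/alpha_inj/(mulfI beta0)/(addrI (e r).1).
Qed.

Lemma coincidence_uniq beta gamma x y c d : beta != gamma ->
  x + beta * alpha c = y + gamma * alpha c ->
  x + beta * alpha d = y + gamma * alpha d -> c = d.
Proof.
rewrite -subr_eq0 => bg0 Ec Ed; apply/alpha_inj/(mulfI bg0).
have diffE z : (beta - gamma) * alpha z
               = y - x + (x + beta * alpha z) - (y + gamma * alpha z) by ring.
by rewrite !diffE Ec Ed !addrK.
Qed.

Lemma coincidence_signs beta gamma u v : beta != gamma ->
  coincidence beta gamma u v \in signs.
Proof.
case: W_weighing => Wsign _ bg.
apply: sum_indicator_signs => [c d /eqP Ec /eqP Ed|c]; last exact: signsM.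
exact: coincidence_uniq bg Ec Ed.
Qed.

Lemma coincidence_shift beta gamma x a b c : beta != gamma ->
  coincidence beta gamma (x, a) (x + (beta - gamma) * alpha c, b) = W a c * W b c.
Proof.
move=> bg; apply: sum_indicator_unique => /= [|d /eqP Ed].
  by apply/eqP; ring.
by apply: (coincidence_uniq bg Ed); ring.
Qed.

Lemma mub_unbiased beta gamma : (0 < k)%N -> beta != gamma ->
  unbiased (k ^ 2) (mub_mx beta) (mub_mx gamma).
Proof.
move=> k0 bg; apply: (unbiased_of_gram k0 (mub_self_gram _) (mub_self_gram _)).
  exact: mub_gram.
by move=> r s; rewrite mxE coincidence_signs.
Qed.

(* Unbiasedness cannot separate M_beta from M_gamma when k = 1.  Instead, the
   entry of M_beta M_gamma^T at ((0, a), ((beta - gamma) alpha_c, a)) is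
   k W_ac^2 = k, whereas M_beta M_beta^T vanishes off the diagonal. *)
Lemma mub_mx_inj a c :
  (0 < k)%N -> W a c != 0 -> alpha c != 0 -> injective mub_mx.
Proof.
case: W_weighing => Wsign _ k0 Wac0 alpha_c0 beta gamma Ebg.
apply/eqP; apply: contraT => bg; have [e' _ e'K] := e_bij.
pose r := e' (0, a); pose s := e' ((beta - gamma) * alpha c, a).
have rs : r != s.
  apply: contraNneq alpha_c0 => /(congr1 e); rewrite !e'K => -[/esym/eqP].
  by rewrite mulf_eq0 subr_eq0 (negbTE bg).
have := mub_gram beta gamma; rewrite -Ebg mub_self_gram => /matrixP/(_ r s).
rewrite !mxE (negbTE rs) /r /s !e'K.
rewrite -[(beta - gamma) * _]add0r coincidence_shift // signs_sqr // mulr1.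
by move/eqP; rewrite eq_sym pnatr_eq0 eqn0Ngt k0.
Qed.

End MubConstruction.

Theorem corollary3p4 (n q : nat) :
  (2 <= n)%N ->
  (exists W : 'M[int]_n, is_weighing n.-1 W) ->
  prime_power q -> (n <= q)%N ->
  exists F : 'I_q.-1 -> 'M[int]_(n * q),
    injective F /\
    (forall i, is_weighing (n.-1 ^ 2) (F i)) /\
    (forall i j, i != j -> unbiased (n.-1 ^ 2) (F i) (F j)).
Proof.
move=> n2 [W hW] [p [m [p_pr [m0 ->]]]] nq.
have [Fq _ cardF] := pPrimePowerField p_pr m0.
have k0 : (0 < n.-1)%N by rewrite -subn1 subn_gt0.
have [c0 Wc0] := weighing_row_nonzero (Ordinal (ltnW n2)) k0 hW.
rewrite -cardF in nq.
have [alpha alpha_inj alpha_c0] := injection_nonzero_at c0 nq.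
have [beta beta_inj beta0] := injection_nonzero cardF.
have [e e_bij] : {e : 'I_(n * p ^ m) -> Fq * 'I_n | bijective e}.
  by apply: card_ord_bij; rewrite card_prod card_ord cardF mulnC.
exists (fun i => mub_mx W alpha e (beta i)); split; [|split].
- by move=> i j /(mub_mx_inj hW alpha_inj e_bij k0 Wc0 alpha_c0) /beta_inj.
- by move=> i; apply: mub_weighing.
- by move=> i j ij; apply: mub_unbiased; rewrite // (inj_eq beta_inj).
Qed.
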